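(* There is no finite (deterministic) matrix $\mathbb{M}$ such that $\vdash_{\mathbb{B}_\diamond}=\vdash_{\mathbb{M}}$ or $\rhd_{\mathbb{B}_\diamond}=\rhd_{\mathbb{M}}$.
   Context: $\mathbb{B}_\diamond=\langle\{0,1\},\cdot,\{1\}\rangle$ is the two-valued Nmatrix with one binary connective $\diamond$ (platypus) interpreted by $\diamond(0,0)=\{0\}$, $\diamond(1,1)=\{1\}$, $\diamond(0,1)=\diamond(1,0)=\{0,1\}$. For an Nmatrix/matrix $\mathbb{M}$ with designated set $D$, $\Gamma\rhd_{\mathbb{M}}\Delta$ iff every $\mathbb{M}$-valuation $v$ with $v(\Gamma)\subseteq D$ has $v(\Delta)\cap D\neq\emptyset$, and $\vdash_{\mathbb{M}}$ is its single-conclusion fragment ($\Gamma\vdash_{\mathbb{M}}\varphi$ iff $\Gamma\rhd_{\mathbb{M}}\{\varphi\}$). *)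

From mathcomp Require Import all_boot.
Set Implicit Arguments. Unset Strict Implicit. Unset Printing Implicit Defensive.

Inductive fm : Type :=
| Var : nat -> fm
| Dia : fm -> fm -> fm.

Definition fmset := fm -> Prop.

(* The Nmatrix B_diamond: values {0,1} = bool (true = 1), designated {1}.
   diaB x y z  <->  z is in the set diamond(x,y). *)
Definition diaB (x y z : bool) : bool := if x == y then z == x else true.

Definition Bval (v : fm -> bool) : Prop :=
  forall a b, diaB (v a) (v b) (v (Dia a b)).

Definition B_mc (G D : fmset) : Prop :=
  forall v, Bval v -> (forall f, G f -> v f = true) -> exists g, D g /\ v g = true.

Definition B_sc (G : fmset) (f : fm) : Prop := B_mc G (fun g => g = f).

(* Valuations are the homomorphisms, i.e. extensions of assignments s. *)
Fixpoint meval (V : Type) (op : V -> V -> V) (s : nat -> V) (f : fm) : V :=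
  match f with
  | Var n => s n
  | Dia a b => op (meval op s a) (meval op s b)
  end.

Definition M_mc (V : finType) (op : V -> V -> V) (Dsg : pred V) (G D : fmset) : Prop :=
  forall s : nat -> V, (forall f, G f -> meval op s f \in Dsg) ->
    exists g, D g /\ meval op s g \in Dsg.

Definition M_sc (V : finType) (op : V -> V -> V) (Dsg : pred V) (G : fmset) (f : fm) : Prop :=
  M_mc op Dsg G (fun g => g = f).

From mathcomp Require Import all_boot.

Set Implicit Arguments.
Unset Strict Implicit.

(* With [p = Var 0] and [q = Var 1], the formulas
   [ladder k = p ◇ (q ◇ (q ◇ ... q))], with [k] inner connectives, all denote
   binary term functions; a finite matrix has only finitely many of those, so
   two distinct ladders are equivalent in it.  In [B_◇], however, the
   valuation making [p] true, every other variable false, and a mixed [a ◇ b]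
   true exactly when the right spine of [b] has length [i], designates
   [ladder i] and no other ladder. *)

Fixpoint qchain (k : nat) : fm :=
  if k is k'.+1 then Dia (Var 1) (qchain k') else Var 1.

Definition ladder (k : nat) : fm := Dia (Var 0) (qchain k).

Fixpoint spine (f : fm) : nat := if f is Dia _ b then (spine b).+1 else 0.

Lemma spine_qchain k : spine (qchain k) = k.
Proof. by elim: k => //= k ->. Qed.

Section FiniteMatrix.

Variables (V : finType) (op : V -> V -> V).

Lemma meval_ladder_ext k (s s' : nat -> V) :
  s 0 = s' 0 -> s 1 = s' 1 -> meval op s (ladder k) = meval op s' (ladder k).
Proof.
move=> s0 s1 /=; rewrite s0; congr (op _ _).
by elim: k => //= k ->; rewrite s1.
Qed.

Lemma binary_term_functions_collide (t : nat -> fm) :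
  (forall k (s s' : nat -> V), s 0 = s' 0 -> s 1 = s' 1 ->
     meval op s (t k) = meval op s' (t k)) ->
  exists i j, i != j /\ forall s, meval op s (t i) = meval op s (t j).
Proof.
move=> t_binary.
pose assign (xy : V * V) (n : nat) := if n == 0 then xy.1 else xy.2.
pose F (k : 'I_#|{ffun V * V -> V}|.+1) :=
  [ffun xy : V * V => meval op (assign xy) (t k)].
have /injectivePn[i [j ij Fij]] : ~~ injectiveb F.
  by apply/injectiveP => /leq_card; rewrite card_ord ltnn.
exists (nat_of_ord i), (nat_of_ord j); split=> // s.
have := congr1 (fun g : {ffun V * V -> V} => g (s 0, s 1)) Fij.
by rewrite !ffunE -!(t_binary _ s).
Qed.

Lemma M_mc_single_eval_eq (Dsg : pred V) f g :
  (forall s, meval op s f = meval op s g) ->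
  M_mc op Dsg (fun h => h = f) (fun h => h = g).
Proof. by move=> fg s designated; exists g; rewrite -fg; split=> //; apply: designated. Qed.

End FiniteMatrix.

Fixpoint spine_val (i : nat) (f : fm) : bool :=
  match f with
  | Var n => n == 0
  | Dia a b => if spine_val i a == spine_val i b then spine_val i a else spine b == i
  end.

Lemma spine_val_Bval i : Bval (spine_val i).
Proof. by move=> a b; rewrite /diaB /=; case: eqP => [->|]; rewrite ?eqxx. Qed.

Lemma spine_val_ladder i k : spine_val i (ladder k) = (k == i).
Proof.
have qchain_false : spine_val i (qchain k) = false by elim: k => //= k ->.
by rewrite /= qchain_false spine_qchain.
Qed.

Lemma B_ladders_independent i j :
  i != j -> ~ B_mc (fun h => h = ladder i) (fun h => h = ladder j).
Proof.
move=> ij /(_ _ (spine_val_Bval i)) B_ij.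
have designated f : f = ladder i -> spine_val i f by move->; rewrite spine_val_ladder.
have [_ [-> ]] := B_ij designated.
by rewrite spine_val_ladder eq_sym (negbTE ij).
Qed.

Theorem theorem1 :
  ~ exists (V : finType) (op : V -> V -> V) (Dsg : pred V),
      (forall (G : fmset) (f : fm), B_sc G f <-> M_sc op Dsg G f) \/
      (forall (G D : fmset), B_mc G D <-> M_mc op Dsg G D).
Proof.
case=> V [op [Dsg B_eq_M]].
have [i [j [ij ladder_ij]]] :=
  binary_term_functions_collide (meval_ladder_ext op).
apply: (B_ladders_independent ij).
by case: B_eq_M => B_eq_M; apply/B_eq_M; apply: M_mc_single_eval_eq.
Qed.
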